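(* Let $f$ be a librational traveling wave of the sine-Gordon equation. Then $0=\mu_1^{(0)}>\mu_2^{(0)}$.
   Context: A traveling wave of speed $c$ ($c^2\neq1$) of $u_{tt}-u_{xx}+\sin u=0$ is a real solution $f$ of $(c^2-1)f''+\sin f=0$, with energy $E$ given by $\tfrac12(c^2-1)(f')^2+1-\cos f=E$; it is librational if $0<E<2$, in which case $f$ is periodic with fundamental period $T$ (smallest $T>0$ with $f(z+T)=f(z)\pmod{2\pi}$). Let $\gamma=1/(c^2-1)$ and consider Hill's operator $L=\frac{d^2}{dz^2}+\gamma\cos(f(z))$. The periodic eigenvalues of $L$ are the $\mu\in\mathbb{R}$ for which $Lq=\mu q$ has a nontrivial solution with $q(z+T)=q(z)$; they form a sequence $\mu_0^{(0)}>\mu_1^{(0)}\ge\mu_2^{(0)}>\mu_3^{(0)}\ge\cdots\to-\infty$ (listed with multiplicity, in decreasing order). *)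

From Stdlib Require Import Reals Lra List ClassicalEpsilon.
From Coquelicot Require Import Coquelicot.
Open Scope R_scope.

Definition traveling_wave (c : R) (f : R -> R) : Prop :=
  (forall z, ex_derive f z /\ ex_derive (Derive f) z) /\
  (forall z, (c ^ 2 - 1) * Derive (Derive f) z + sin (f z) = 0).

Definition has_energy (c : R) (f : R -> R) (E : R) : Prop :=
  forall z, / 2 * (c ^ 2 - 1) * (Derive f z) ^ 2 + 1 - cos (f z) = E.

Definition period_mod_2pi (f : R -> R) (T : R) : Prop :=
  forall z, exists k : Z, f (z + T) = f z + 2 * IZR k * PI.

Definition fundamental_period (f : R -> R) (T : R) : Prop :=
  0 < T /\ period_mod_2pi f T /\
  (forall T', 0 < T' < T -> ~ period_mod_2pi f T').

Definition periodic_solution (gamma : R) (f : R -> R) (T mu : R) (q : R -> R) : Prop :=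
  (forall z, ex_derive q z /\ ex_derive (Derive q) z) /\
  (forall z, Derive (Derive q) z + gamma * cos (f z) * q z = mu * q z) /\
  (forall z, q (z + T) = q z).

Definition periodic_eigenvalue (gamma : R) (f : R -> R) (T mu : R) : Prop :=
  exists q, periodic_solution gamma f T mu q /\ exists z, q z <> 0.

Definition periodic_eigenspace_dim_ge2 (gamma : R) (f : R -> R) (T mu : R) : Prop :=
  exists q1 q2, periodic_solution gamma f T mu q1 /\ periodic_solution gamma f T mu q2 /\
    (forall a b, (forall z, a * q1 z + b * q2 z = 0) -> a = 0 /\ b = 0).

(* multiplicity of mu = dimension of the space of T-periodic solutions
   (which is at most 2, the solution space of the second order ODE being 2-dim) *)
Definition pmult (gamma : R) (f : R -> R) (T mu : R) : nat :=
  if excluded_middle_informative (periodic_eigenspace_dim_ge2 gamma f T mu) then 2%nat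
  else if excluded_middle_informative (periodic_eigenvalue gamma f T mu) then 1%nat
  else 0%nat.

Definition sum_mult (gamma : R) (f : R -> R) (T : R) (l : list R) : nat :=
  fold_right (fun nu acc => (pmult gamma f T nu + acc)%nat) 0%nat l.

Definition count_gt (gamma : R) (f : R -> R) (T mu : R) (k : nat) : Prop :=
  exists l : list R, NoDup l /\
    (forall nu, In nu l <-> (periodic_eigenvalue gamma f T nu /\ mu < nu)) /\
    sum_mult gamma f T l = k.

Definition count_ge (gamma : R) (f : R -> R) (T mu : R) (k : nat) : Prop :=
  exists l : list R, NoDup l /\
    (forall nu, In nu l <-> (periodic_eigenvalue gamma f T nu /\ mu <= nu)) /\
    sum_mult gamma f T l = k.

(* mu = mu_n^{(0)}: the n-th (from 0) periodic eigenvalue in decreasing order,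
   listed with multiplicity *)
Definition periodic_eig_index (gamma : R) (f : R -> R) (T : R) (n : nat) (mu : R) : Prop :=
  exists a b, count_gt gamma f T mu a /\ count_ge gamma f T mu b /\ (a <= n < b)%nat.

From Stdlib Require Import Reals Lra Lia ZArith List ClassicalEpsilon Classical.
From Coquelicot Require Import Coquelicot.
Open Scope R_scope.

(* The wave is a pendulum orbit h'' = - gam sin h with gam > 0 (after replacing f by f + pi
   when c^2 < 1, and a 2k pi shift), oscillating in (-pi, pi).  Such an orbit is even about
   its maximum z1 and odd about its next zero z0, with period T = 4 (z0 - z1), so the Hill
   potential gam cos h has both reflection symmetries.  Three eigenfunctions are explicit:
   cos (h/2) > 0 with eigenvalue gam (1 - E/2) > 0, h' with eigenvalue 0, and sin (h/2)
   with eigenvalue - gam E/2 < 0.  Splitting a periodic eigenfunction into its four parity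
   parts about z1 and z0, Sturm comparison with these three on quarter and half periods
   shows that every eigenvalue above - gam E/2 is gam (1 - E/2) or 0, each simple. *)

Lemma is_derive_reflect (f : R -> R) c x : ex_derive f (2 * c - x) ->
  is_derive (fun t => f (2 * c - t)) x (- Derive f (2 * c - x)).
Proof.
  intros Hf. auto_derive; [exact Hf|].
  change (- 1 * Derive f (2 * c - x) = - Derive f (2 * c - x)). ring.
Qed.

Lemma is_derive_shift (f : R -> R) c x : ex_derive f (x + c) ->
  is_derive (fun t => f (t + c)) x (Derive f (x + c)).
Proof.
  intros Hf. auto_derive; [exact Hf|]. change (1 * Derive f (x + c) = Derive f (x + c)). ring.
Qed.

Lemma ex_derive_continuity_pt (f : R -> R) x : ex_derive f x -> continuity_pt f x.
Proof. intros Hf. apply continuity_pt_filterlim, (ex_derive_continuous f x Hf). Qed.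

Lemma derive_pos_incr (f df : R -> R) a b : a < b -> (forall x, is_derive f x (df x)) ->
  (forall x, a < x < b -> 0 < df x) -> f a < f b.
Proof.
  intros Hab Hf Hpos.
  destruct (MVT_cor2 f df a b Hab) as [c [Hc Hcab]].
  { intros c _. apply is_derive_Reals, Hf. }
  specialize (Hpos c Hcab). nra.
Qed.

Lemma derive_neg_decr (f df : R -> R) a b : a < b -> (forall x, is_derive f x (df x)) ->
  (forall x, a < x < b -> df x < 0) -> f b < f a.
Proof.
  intros Hab Hf Hneg.
  enough (- f a < - f b) by lra.
  apply (derive_pos_incr (fun t => - f t) (fun t => - df t) a b Hab).
  - intros x. apply (is_derive_opp f x (df x) (Hf x)).
  - intros x Hx. specialize (Hneg x Hx). lra.
Qed.

Lemma derive_nonpos_nonincr (f df : R -> R) a b : a <= b -> (forall x, is_derive f x (df x)) ->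
  (forall x, a < x < b -> df x <= 0) -> f b <= f a.
Proof.
  intros Hab Hf Hneg. destruct (Req_dec a b) as [<-|Hne]; [lra|].
  destruct (MVT_cor2 f df a b) as [c [Hc Hcab]]; [lra| |].
  { intros c _. apply is_derive_Reals, Hf. }
  specialize (Hneg c Hcab). nra.
Qed.

Lemma is_derive_pos_sign (f : R -> R) x l : is_derive f x l -> 0 < l ->
  exists del, 0 < del /\ forall h, 0 < h < del -> f (x - h) < f x < f (x + h).
Proof.
  intros Hf Hl. apply is_derive_Reals in Hf. destruct (Hf l Hl) as [del Hdel].
  exists del. split; [apply cond_pos|]. intros h Hh.
  assert (Hih : 0 < / h) by (apply Rinv_0_lt_compat; lra).
  assert (Hm := Hdel (- h) ltac:(lra) ltac:(rewrite Rabs_Ropp, Rabs_right; lra)).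
  assert (Hp := Hdel h ltac:(lra) ltac:(rewrite Rabs_right; lra)).
  apply Rabs_def2 in Hm, Hp. replace (x + - h) with (x - h) in Hm by ring.
  unfold Rdiv in Hm, Hp. rewrite Rinv_opp in Hm. split; nra.
Qed.

Lemma exists_pos_below del w : 0 < del -> 0 < w -> exists h, 0 < h < del /\ h < w.
Proof.
  intros Hdel Hw. exists (Rmin del w / 2).
  pose proof (Rmin_l del w). pose proof (Rmin_r del w). pose proof (Rmin_glb_lt del w 0 Hdel Hw). lra.
Qed.

Lemma continuity_pt_pos_near (s : R -> R) a : continuity_pt s a -> 0 < s a ->
  exists del, 0 < del /\ forall z, Rabs (z - a) < del -> 0 < s z.
Proof.
  intros Hs Ha. destruct (Hs (s a) Ha) as [del [Hdel Hnear]].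
  exists del. split; [exact Hdel|]. intros z Hz.
  destruct (Req_dec z a) as [->|Hza]; [exact Ha|].
  assert (Hd := Hnear z (conj (conj I (not_eq_sym Hza)) Hz)).
  unfold R_dist in Hd. apply Rabs_def2 in Hd. lra.
Qed.

Lemma continuity_pt_nonzero_near (s : R -> R) a : continuity_pt s a -> s a <> 0 ->
  exists del, 0 < del /\ forall z, Rabs (z - a) < del -> s z <> 0.
Proof.
  intros Hs Ha. destruct (Rlt_or_le 0 (s a)) as [Hpos|Hneg].
  - destruct (continuity_pt_pos_near s a Hs Hpos) as [del [Hdel Hnear]].
    exists del. split; [exact Hdel|]. intros z Hz. specialize (Hnear z Hz). lra.
  - destruct (continuity_pt_pos_near (fun t => - s t) a (continuity_pt_opp s a Hs))
      as [del [Hdel Hnear]]; [lra|].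
    exists del. split; [exact Hdel|]. intros z Hz. specialize (Hnear z Hz). lra.
Qed.

Lemma continuity_pt_nonneg_left (s : R -> R) a b : a < b -> continuity_pt s a ->
  (forall z, a < z < b -> 0 < s z) -> 0 <= s a.
Proof.
  intros Hab Hs Hpos. destruct (Rle_or_lt 0 (s a)) as [|Hneg]; [assumption|].
  destruct (continuity_pt_pos_near (fun t => - s t) a (continuity_pt_opp s a Hs))
    as [del [Hdel Hnear]]; [lra|].
  destruct (exists_pos_below del (b - a) Hdel ltac:(lra)) as [h Hh].
  assert (0 < - s (a + h)) by (apply Hnear; rewrite Rabs_right; lra).
  specialize (Hpos (a + h) ltac:(lra)). lra.
Qed.

Lemma continuity_pt_nonneg_right (s : R -> R) a b : a < b -> continuity_pt s b ->
  (forall z, a < z < b -> 0 < s z) -> 0 <= s b.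
Proof.
  intros Hab Hs Hpos.
  rewrite <- (Ropp_involutive b).
  apply (continuity_pt_nonneg_left (fun t => s (- t)) (- b) (- a)); [lra| |].
  - apply continuity_pt_comp; [apply continuity_pt_opp, continuity_pt_id|].
    now rewrite Ropp_involutive.
  - intros z Hz. apply Hpos. lra.
Qed.

Lemma zero_nonzero_right (q : R -> R) a d : is_derive q a d -> q a = 0 -> d <> 0 ->
  exists del, 0 < del /\ forall z, a < z < a + del -> q z <> 0.
Proof.
  intros Hq Ha Hd. destruct (Rlt_or_le 0 d) as [Hpos|Hneg].
  - destruct (is_derive_pos_sign q a d Hq Hpos) as [del [Hdel Hsign]].
    exists del. split; [exact Hdel|]. intros z Hz.
    specialize (Hsign (z - a) ltac:(lra)). replace (a + (z - a)) with z in Hsign by ring. lra.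
  - destruct (is_derive_pos_sign (fun t => - q t) a (- d)) as [del [Hdel Hsign]];
      [apply (is_derive_opp q a d Hq) | lra|].
    exists del. split; [exact Hdel|]. intros z Hz.
    specialize (Hsign (z - a) ltac:(lra)). replace (a + (z - a)) with z in Hsign by ring. lra.
Qed.

Lemma zero_deriv_nonneg_left (q : R -> R) a b d : a < b -> is_derive q a d -> q a = 0 ->
  (forall z, a < z < b -> 0 < q z) -> 0 <= d.
Proof.
  intros Hab Hq Ha Hpos. destruct (Rle_or_lt 0 d) as [|Hneg]; [assumption|].
  destruct (is_derive_pos_sign (fun t => - q t) a (- d)) as [del [Hdel Hsign]];
    [apply (is_derive_opp q a d Hq) | lra|].
  destruct (exists_pos_below del (b - a) Hdel ltac:(lra)) as [h Hh].
  specialize (Hsign h ltac:(lra)). specialize (Hpos (a + h) ltac:(lra)). lra.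
Qed.

Lemma zero_deriv_nonpos_right (q : R -> R) a b d : a < b -> is_derive q b d -> q b = 0 ->
  (forall z, a < z < b -> 0 < q z) -> d <= 0.
Proof.
  intros Hab Hq Hb Hpos. destruct (Rle_or_lt d 0) as [|Hd]; [assumption|].
  destruct (is_derive_pos_sign q b d Hq Hd) as [del [Hdel Hsign]].
  destruct (exists_pos_below del (b - a) Hdel ltac:(lra)) as [h Hh].
  specialize (Hsign h ltac:(lra)). specialize (Hpos (b - h) ltac:(lra)). lra.
Qed.

Lemma first_zero_after (q : R -> R) a b : (forall x, continuity_pt q x) -> a < b -> q b = 0 ->
  (exists del, 0 < del /\ forall z, a < z < a + del -> q z <> 0) ->
  exists b', a < b' <= b /\ q b' = 0 /\ forall z, a < z < b' -> q z <> 0.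
Proof.
  intros Hq Hab Hb [del [Hdel Hnz]].
  (* b' is the infimum of the zeros in (a, b], obtained as minus a supremum *)
  set (F := fun y => exists x, (a < x <= b /\ q x = 0) /\ y = - x).
  assert (HFb : bound F) by (exists (- a); intros y [x [[Hx _] ->]]; lra).
  assert (HFne : exists y, F y) by (exists (- b), b; repeat split; auto; lra).
  destruct (completeness F HFb HFne) as [L [HLub HLleast]].
  set (m := - L).
  assert (Hlow : forall x, a < x <= b -> q x = 0 -> m <= x).
  { intros x Hx Hqx. assert (HFx : F (- x)) by (exists x; auto). specialize (HLub _ HFx). unfold m; lra. }
  assert (Hgreat : forall l, (forall x, a < x <= b -> q x = 0 -> l <= x) -> l <= m).
  { intros l Hl. enough (L <= - l) by (unfold m; lra).
    apply HLleast. intros y [x [[Hx Hqx] ->]]. specialize (Hl x Hx Hqx). lra. }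
  assert (Hm : a + del <= m).
  { apply Hgreat. intros x Hx Hqx. destruct (Rlt_or_le x (a + del)) as [Hlt|]; [|assumption].
    exfalso. apply (Hnz x); [lra | exact Hqx]. }
  assert (Hmb : m <= b) by (apply Hlow; auto; lra).
  assert (Hqm : q m = 0).
  { apply NNPP. intros Hqm.
    destruct (continuity_pt_nonzero_near q m (Hq m) Hqm) as [eta [Heta Hn]].
    enough (m + eta / 2 <= m) by lra.
    apply Hgreat. intros x Hx Hqx. assert (m <= x) by (apply Hlow; auto).
    destruct (Rlt_or_le x (m + eta)); [|lra].
    exfalso. apply (Hn x); [apply Rabs_def1; lra | exact Hqx]. }
  exists m. split; [lra|]. split; [exact Hqm|]. intros z Hz Hqz.
  assert (m <= z) by (apply Hlow; auto; lra). lra.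
Qed.

Lemma nonzero_sign_const (q : R -> R) a b : (forall x, continuity_pt q x) ->
  (forall z, a < z < b -> q z <> 0) ->
  (forall z, a < z < b -> 0 < q z) \/ (forall z, a < z < b -> q z < 0).
Proof.
  intros Hq Hnz.
  destruct (classic (exists z, a < z < b /\ 0 < q z)) as [[z1 [Hz1 Hq1]]|Hno].
  - left. intros z Hz. destruct (Rlt_or_le 0 (q z)) as [|Hle]; [assumption|].
    exfalso. destruct (IVT_gen q z1 z 0 Hq) as [x [Hx Hqx]].
    + split; [apply Rle_trans with (q z); [apply Rmin_r | lra]|].
      apply Rle_trans with (q z1); [lra | apply Rmax_l].
    + apply (Hnz x); [|exact Hqx]. split.
      * apply Rlt_le_trans with (Rmin z1 z); [apply Rmin_glb_lt|]; lra.
      * apply Rle_lt_trans with (Rmax z1 z); [|apply Rmax_lub_lt]; lra.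
  - right. intros z Hz. destruct (Rlt_or_le (q z) 0) as [|Hle]; [assumption|].
    exfalso. destruct (Req_dec (q z) 0) as [H0|H0]; [exact (Hnz z Hz H0)|].
    apply Hno. exists z. split; [exact Hz | lra].
Qed.

Lemma gronwall_zero_right (E dE : R -> R) K a : (forall x, is_derive E x (dE x)) ->
  (forall x, 0 <= E x) -> (forall x, Rabs (dE x) <= K * E x) -> E a = 0 ->
  forall x, a <= x -> E x = 0.
Proof.
  intros HE Hnn Hbnd Ha x Hx.
  set (G := fun t => E t * exp (- K * t)).
  assert (HG : forall t, is_derive G t ((dE t - K * E t) * exp (- K * t))).
  { intros t. unfold G. auto_derive; [apply (ex_intro _ _ (HE t))|].
    change (1 * Derive E t * exp (- K * t) + E t * (- K * 1 * exp (- K * t))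
            = (dE t - K * E t) * exp (- K * t)).
    rewrite (is_derive_unique E t (dE t) (HE t)). ring. }
  assert (HGx : G x <= G a).
  { apply (derive_nonpos_nonincr G _ a x Hx HG). intros t _.
    assert (dE t <= K * E t) by (specialize (Hbnd t); apply Rabs_le_between in Hbnd; lra).
    pose proof (exp_pos (- K * t)). nra. }
  unfold G in HGx. rewrite Ha in HGx. pose proof (exp_pos (- K * x)). specialize (Hnn x). nra.
Qed.

Lemma gronwall_zero (E dE : R -> R) K a : (forall x, is_derive E x (dE x)) ->
  (forall x, 0 <= E x) -> (forall x, Rabs (dE x) <= K * E x) -> E a = 0 ->
  forall x, E x = 0.
Proof.
  intros HE Hnn Hbnd Ha x. destruct (Rle_or_lt a x) as [Hx|Hx].
  - exact (gronwall_zero_right E dE K a HE Hnn Hbnd Ha x Hx).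
  - replace x with (2 * a - (2 * a - x)) by ring.
    apply (gronwall_zero_right (fun t => E (2 * a - t)) (fun t => - dE (2 * a - t)) K a);
      [| intros t; apply Hnn | intros t; rewrite Rabs_Ropp; apply Hbnd
       | replace (2 * a - a) with a by ring; exact Ha | lra].
    intros t. replace (- dE (2 * a - t)) with ((0 - 1) * dE (2 * a - t)) by ring.
    apply (is_derive_comp E (fun t => 2 * a - t) t (dE (2 * a - t)) (0 - 1) (HE _)).
    apply (is_derive_minus (fun _ => 2 * a) (fun t => t) t 0 1);
      [exact (is_derive_const (2 * a) t) | exact (is_derive_id t)].
Qed.

Definition C2 (y : R -> R) := forall z, ex_derive y z /\ ex_derive (Derive y) z.

Lemma is_derive_C2_sub (y1 y2 : R -> R) t : C2 y1 -> C2 y2 ->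
  is_derive (fun s => y1 s - y2 s) t (Derive y1 t - Derive y2 t) /\
  is_derive (fun s => Derive y1 s - Derive y2 s) t
    (Derive (Derive y1) t - Derive (Derive y2) t).
Proof.
  intros H1 H2. destruct (H1 t) as [A1 B1], (H2 t) as [A2 B2]. split.
  - exact (is_derive_minus y1 y2 t _ _ (Derive_correct _ _ A1) (Derive_correct _ _ A2)).
  - exact (is_derive_minus (Derive y1) (Derive y2) t _ _
             (Derive_correct _ _ B1) (Derive_correct _ _ B2)).
Qed.

Lemma energy_derivative_bound L d e g : 0 <= L -> Rabs g <= L * Rabs d ->
  Rabs (2 * (d * e) + 2 * (e * g)) <= (1 + L) * (d * d + e * e).
Proof.
  intros HL0 Hg.
  assert (Hsq : forall x, Rabs x * Rabs x = x * x)
    by (intros x; rewrite <- Rabs_mult; apply Rabs_right; nra).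
  assert (Hed : 2 * (Rabs e * Rabs d) <= d * d + e * e).
  { pose proof (Rle_0_sqr (Rabs e - Rabs d)). unfold Rsqr in *.
    rewrite <- (Hsq d), <- (Hsq e). nra. }
  assert (Hde : Rabs (2 * (d * e)) <= d * d + e * e)
    by (rewrite !Rabs_mult, (Rabs_right 2) by lra; nra).
  assert (Heg : Rabs (2 * (e * g)) <= L * (d * d + e * e)).
  { rewrite !Rabs_mult, (Rabs_right 2) by lra.
    assert (Rabs e * Rabs g <= Rabs e * (L * Rabs d))
      by (apply Rmult_le_compat_l; [apply Rabs_pos | exact Hg]).
    pose proof (Rmult_le_compat_l L _ _ HL0 Hed). nra. }
  eapply Rle_trans; [apply Rabs_triang | lra].
Qed.

(* Gronwall applied to |y1 - y2|^2 + |y1' - y2'|^2. *)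
Lemma ode2_unique (G : R -> R -> R) L (y1 y2 : R -> R) a :
  (forall t x y, Rabs (G t x - G t y) <= L * Rabs (x - y)) ->
  C2 y1 -> C2 y2 ->
  (forall t, Derive (Derive y1) t = G t (y1 t)) ->
  (forall t, Derive (Derive y2) t = G t (y2 t)) ->
  y1 a = y2 a -> Derive y1 a = Derive y2 a -> forall t, y1 t = y2 t.
Proof.
  intros HL H1 H2 E1 E2 Ha Hda.
  assert (HL0 : 0 <= L).
  { specialize (HL 0 1 0). rewrite Rminus_0_r, Rabs_R1 in HL.
    pose proof (Rabs_pos (G 0 1 - G 0 0)). lra. }
  set (d := fun s => y1 s - y2 s). set (e := fun s => Derive y1 s - Derive y2 s).
  set (g := fun s => G s (y1 s) - G s (y2 s)).
  set (En := fun s => d s * d s + e s * e s).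
  assert (HEn : forall s, is_derive En s (e s * d s + d s * e s + (g s * e s + e s * g s))).
  { intros s. destruct (is_derive_C2_sub y1 y2 s H1 H2) as [Dd De].
    rewrite E1, E2 in De.
    exact (is_derive_plus (fun s => d s * d s) (fun s => e s * e s) s _ _
             (Derive.is_derive_mult d d s _ _ Dd Dd) (Derive.is_derive_mult e e s _ _ De De)). }
  assert (Hz : forall s, En s = 0).
  { apply (gronwall_zero En _ (1 + L) a HEn).
    - intros s. unfold En. nra.
    - intros s. replace (e s * d s + d s * e s + (g s * e s + e s * g s))
        with (2 * (d s * e s) + 2 * (e s * g s)) by ring.
      apply energy_derivative_bound; [exact HL0 | apply HL].
    - unfold En, d, e. rewrite Ha, Hda. ring. }
  intros t. specialize (Hz t). unfold En, d, e in Hz.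
  pose proof (Rle_0_sqr (y1 t - y2 t)). pose proof (Rle_0_sqr (Derive y1 t - Derive y2 t)).
  unfold Rsqr in *.
  assert (Hsq : (y1 t - y2 t) * (y1 t - y2 t) = 0) by lra.
  apply Rmult_integral in Hsq. lra.
Qed.
Definition hill_solution (V : R -> R) (mu : R) (q : R -> R) :=
  C2 q /\ forall z, Derive (Derive q) z + V z * q z = mu * q z.

Definition wronskian (p q : R -> R) (t : R) := Derive p t * q t - p t * Derive q t.

Lemma Derive_reflect_sym_zero (q : R -> R) (c : R) : ex_derive q c ->
  (forall z, q (2 * c - z) = q z) -> Derive q c = 0.
Proof.
  intros Hq Hs.
  assert (Hsym : Derive q c = Derive (fun t => q (2 * c - t)) c)
    by (apply Derive_ext; intros t; symmetry; apply Hs).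
  assert (Hc : 2 * c - c = c) by ring.
  replace (Derive (fun t => q (2 * c - t)) c) with (- Derive q (2 * c - c)) in Hsym
    by (symmetry; apply is_derive_unique, is_derive_reflect; rewrite Hc; exact Hq).
  rewrite Hc in Hsym. lra.
Qed.

Lemma hill_solution_intro V mu (w w1 w2 : R -> R) :
  (forall z, is_derive w z (w1 z)) -> (forall z, is_derive w1 z (w2 z)) ->
  (forall z, w2 z + V z * w z = mu * w z) -> hill_solution V mu w.
Proof.
  intros D1 D2 Hw.
  assert (HD : forall z, Derive w z = w1 z) by (intros z; apply is_derive_unique, D1).
  split.
  - intros z. split; [eexists; apply D1|].
    apply (ex_derive_ext w1); [intros t; now rewrite HD | eexists; apply D2].
  - intros z. rewrite (Derive_ext _ _ z HD), (is_derive_unique _ _ _ (D2 z)). apply Hw.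
Qed.

Section HillEquation.

Variables (V : R -> R) (M : R).
Hypothesis V_bounded : forall z, Rabs (V z) <= M.

Lemma hill_solution_continuous mu q : hill_solution V mu q -> forall x, continuity_pt q x.
Proof. intros [Hq _] x. apply ex_derive_continuity_pt, Hq. Qed.

Lemma hill_solution_zero mu q a : hill_solution V mu q ->
  q a = 0 -> Derive q a = 0 -> forall z, q z = 0.
Proof.
  intros [Hq Eq] Ha Hda.
  assert (HD0 : forall t, Derive (fun _ : R => 0) t = 0) by (intros t; apply Derive_const).
  apply (ode2_unique (fun t x => (mu - V t) * x) (Rabs mu + M) q (fun _ => 0) a).
  - intros t x y. rewrite <- Rmult_minus_distr_l, Rabs_mult.
    apply Rmult_le_compat_r; [apply Rabs_pos|].
    eapply Rle_trans; [apply Rabs_triang|]. rewrite Rabs_Ropp.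
    specialize (V_bounded t). lra.
  - exact Hq.
  - intros t. split; [apply ex_derive_const|].
    apply (ex_derive_ext (fun _ => 0)); [intros s; now rewrite HD0 | apply ex_derive_const].
  - intros t. specialize (Eq t). lra.
  - intros t. rewrite (Derive_ext _ _ t HD0), HD0. ring.
  - exact Ha.
  - now rewrite HD0.
Qed.

Lemma hill_solution_ext mu p q : (forall z, p z = q z) -> hill_solution V mu p ->
  hill_solution V mu q.
Proof.
  intros Hpq [Hp Ep].
  assert (HD : forall t, Derive p t = Derive q t) by (intros t; apply Derive_ext, Hpq).
  split.
  - intros z. split; [apply (ex_derive_ext p) | apply (ex_derive_ext (Derive p))]; auto; apply Hp.
  - intros z. rewrite <- (Derive_ext _ _ z HD), <- Hpq. apply Ep.
Qed.

Lemma is_derive_lin_comb (q1 q2 : R -> R) al be z : ex_derive q1 z -> ex_derive q2 z ->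
  is_derive (fun t => al * q1 t + be * q2 t) z (al * Derive q1 z + be * Derive q2 z).
Proof.
  intros H1 H2.
  apply (is_derive_plus (fun t => al * q1 t) (fun t => be * q2 t));
    apply is_derive_scal, Derive_correct; assumption.
Qed.

Lemma hill_solution_lin_comb mu q1 q2 al be : hill_solution V mu q1 -> hill_solution V mu q2 ->
  hill_solution V mu (fun t => al * q1 t + be * q2 t).
Proof.
  intros [H1 E1] [H2 E2].
  apply (hill_solution_intro _ _ _ (fun t => al * Derive q1 t + be * Derive q2 t)
           (fun t => al * Derive (Derive q1) t + be * Derive (Derive q2) t));
    [intros z; apply is_derive_lin_comb; [apply H1 | apply H2] ..|].
  intros z. specialize (E1 z). specialize (E2 z). nra.
Qed.

Lemma hill_solution_opp mu q : hill_solution V mu q -> hill_solution V mu (fun t => - q t).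
Proof.
  intros Hq. apply (hill_solution_ext mu (fun t => -1 * q t + 0 * q t)).
  - intros z. ring.
  - now apply hill_solution_lin_comb.
Qed.

Lemma hill_solution_reflect mu q c : (forall z, V (2 * c - z) = V z) ->
  hill_solution V mu q -> hill_solution V mu (fun z => q (2 * c - z)).
Proof.
  intros HV [Hq Eq].
  apply (hill_solution_intro _ _ _ (fun t => - Derive q (2 * c - t))
           (fun t => Derive (Derive q) (2 * c - t))).
  - intros z. apply is_derive_reflect, Hq.
  - intros z. rewrite <- (Ropp_involutive (Derive (Derive q) (2 * c - z))).
    apply (is_derive_opp (fun t => Derive q (2 * c - t))), is_derive_reflect, Hq.
  - intros z. rewrite <- HV. apply Eq.
Qed.

Lemma is_derive_wronskian mu sig q s z : hill_solution V mu q -> hill_solution V sig s ->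
  is_derive (wronskian q s) z ((mu - sig) * q z * s z).
Proof.
  intros [Hq Eq] [Hs Es]. destruct (Hq z) as [Hq1 Hq2], (Hs z) as [Hs1 Hs2].
  replace ((mu - sig) * q z * s z) with
    ((Derive (Derive q) z * s z + Derive q z * Derive s z)
     - (Derive q z * Derive s z + q z * Derive (Derive s) z))
    by (specialize (Eq z); specialize (Es z); nra).
  apply (is_derive_minus (fun t => Derive q t * s t) (fun t => q t * Derive s t));
    apply Derive.is_derive_mult; apply Derive_correct; assumption.
Qed.

Lemma hill_wronskian_zero_proportional mu q p a :
  hill_solution V mu q -> hill_solution V mu p ->
  wronskian q p a = 0 -> (p a <> 0 \/ Derive p a <> 0) ->
  exists al, forall z, q z = al * p z.
Proof.
  intros Hq Hp HW Hpa. unfold wronskian in HW.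
  assert (Hdq := proj1 (proj1 Hq a)). assert (Hdp := proj1 (proj1 Hp a)).
  assert (Hcomb : forall al, q a - al * p a = 0 -> Derive q a - al * Derive p a = 0 ->
                    forall z, q z = al * p z).
  { intros al H0 H1 z.
    assert (Hr := hill_solution_zero mu _ a
                    (hill_solution_lin_comb mu q p 1 (- al) Hq Hp)).
    replace (Derive _ a) with (1 * Derive q a + - al * Derive p a) in Hr
      by (symmetry; apply is_derive_unique, is_derive_lin_comb; assumption).
    specialize (Hr ltac:(lra) ltac:(lra) z). lra. }
  destruct (Req_dec (p a) 0) as [Hp0|Hp0].
  - assert (Hd : Derive p a <> 0) by tauto.
    exists (Derive q a / Derive p a). apply Hcomb; [|field; exact Hd].
    rewrite Hp0 in HW |- *.
    assert (Hqa : q a * Derive p a = 0) by lra.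
    apply Rmult_integral in Hqa. destruct Hqa; [lra | contradiction].
  - exists (q a / p a). apply Hcomb; [field; exact Hp0|].
    apply Rmult_eq_reg_r with (p a); [|exact Hp0].
    replace ((Derive q a - q a / p a * Derive p a) * p a) with (Derive q a * p a - q a * Derive p a)
      by (field; exact Hp0). lra.
Qed.

Lemma sturm_comparison_pos mu sig q s a b : hill_solution V mu q -> hill_solution V sig s ->
  a < b -> q a = 0 -> q b = 0 -> (forall z, a < z < b -> 0 < q z) ->
  (forall z, a < z < b -> 0 < s z) -> mu <= sig.
Proof.
  intros Sq Ss Hab Ha Hb Hq Hs. destruct (Rle_or_lt mu sig) as [|Hlt]; [assumption|]. exfalso.
  assert (HW : wronskian q s a < wronskian q s b).
  { apply (derive_pos_incr _ (fun t => (mu - sig) * q t * s t) a b Hab).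
    - intros x. apply is_derive_wronskian; assumption.
    - intros x Hx. specialize (Hq x Hx). specialize (Hs x Hx).
      apply Rmult_lt_0_compat; [apply Rmult_lt_0_compat|]; lra. }
  destruct Sq as [Dq _], Ss as [Ds _].
  assert (0 <= Derive q a)
    by (apply (zero_deriv_nonneg_left q a b); auto; apply Derive_correct, Dq).
  assert (Derive q b <= 0)
    by (apply (zero_deriv_nonpos_right q a b); auto; apply Derive_correct, Dq).
  assert (0 <= s a)
    by (apply (continuity_pt_nonneg_left s a b); auto; apply ex_derive_continuity_pt, Ds).
  assert (0 <= s b)
    by (apply (continuity_pt_nonneg_right s a b); auto; apply ex_derive_continuity_pt, Ds).
  unfold wronskian in HW. rewrite Ha, Hb in HW. nra.
Qed.

Lemma sturm_comparison mu sig q s a b : hill_solution V mu q -> hill_solution V sig s ->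
  a < b -> q a = 0 -> q b = 0 -> (exists z, q z <> 0) ->
  (forall z, a < z < b -> s z <> 0) -> mu <= sig.
Proof.
  intros Sq Ss Hab Ha Hb [z0 Hz0] Hs.
  assert (Hd : Derive q a <> 0) by (intros Hd; apply Hz0, (hill_solution_zero mu q a); auto).
  (* reduce to consecutive zeros a < b' of q *)
  destruct (first_zero_after q a b (hill_solution_continuous _ _ Sq) Hab Hb)
    as [b' [Hb' [Hqb' Hnz]]].
  { apply (zero_nonzero_right q a (Derive q a)); auto. apply Derive_correct, (proj1 Sq). }
  assert (Hs' : forall z, a < z < b' -> s z <> 0) by (intros z Hz; apply Hs; lra).
  assert (Sq' := hill_solution_opp _ _ Sq). assert (Ss' := hill_solution_opp _ _ Ss).
  destruct (nonzero_sign_const q a b' (hill_solution_continuous _ _ Sq) Hnz) as [Pq|Nq];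
  destruct (nonzero_sign_const s a b' (hill_solution_continuous _ _ Ss) Hs') as [Ps|Ns].
  - apply (sturm_comparison_pos mu sig q s a b'); auto; lra.
  - apply (sturm_comparison_pos mu sig q _ a b' Sq Ss'); auto; [lra|].
    intros z Hz. specialize (Ns z Hz). lra.
  - apply (sturm_comparison_pos mu sig _ s a b' Sq' Ss); auto; try lra.
    intros z Hz. specialize (Nq z Hz). lra.
  - apply (sturm_comparison_pos mu sig _ _ a b' Sq' Ss'); try lra;
      intros z Hz; [specialize (Nq z Hz) | specialize (Ns z Hz)]; lra.
Qed.

End HillEquation.

(* The component of q of parity [a] about z1 and [b] about z0 (a, b = 1 or -1). *)
Definition parity_part (z1 z0 a b : R) (q : R -> R) (z : R) :=
  (q z + a * q (2 * z1 - z) + b * q (2 * z0 - z) + a * b * q (2 * z1 - (2 * z0 - z))) / 4.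

Lemma parity_part_solution V mu q z1 z0 a b :
  (forall z, V (2 * z1 - z) = V z) -> (forall z, V (2 * z0 - z) = V z) ->
  hill_solution V mu q -> hill_solution V mu (parity_part z1 z0 a b q).
Proof.
  intros H1 H0 Sq.
  assert (S1 := hill_solution_reflect V mu q z1 H1 Sq).
  assert (S0 := hill_solution_reflect V mu q z0 H0 Sq).
  assert (S10 := hill_solution_reflect V mu _ z0 H0 S1).
  assert (A1 := hill_solution_lin_comb V mu _ _ 1 a Sq S1).
  assert (A2 := hill_solution_lin_comb V mu _ _ b (a * b) S0 S10).
  eapply hill_solution_ext; [| exact (hill_solution_lin_comb V mu _ _ (/ 4) (/ 4) A1 A2)].
  intros z. cbv beta. unfold parity_part. field.
Qed.

Lemma sign_cases (a : R) : a * a = 1 -> a = 1 \/ a = -1.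
Proof. intros Ha. destruct (Rtotal_order a 0) as [|[|]]; nra. Qed.

(* The reflection about z1 must also be conjugated past the one about z0, which
   is where the period 4 (z0 - z1) enters. *)
Lemma parity_part_sym1 q z1 z0 a b : (forall z, q (z + 4 * (z0 - z1)) = q z) ->
  a * a = 1 -> forall z, parity_part z1 z0 a b q (2 * z1 - z) = a * parity_part z1 z0 a b q z.
Proof.
  intros Hp Ha z. unfold parity_part.
  replace (2 * z1 - (2 * z1 - z)) with z by ring.
  replace (q (2 * z0 - (2 * z1 - z))) with (q (2 * z1 - (2 * z0 - z)))
    by (rewrite <- (Hp (2 * z1 - (2 * z0 - z))); f_equal; ring).
  replace (q (2 * z1 - (2 * z0 - (2 * z1 - z)))) with (q (2 * z0 - z))
    by (rewrite <- (Hp (2 * z1 - (2 * z0 - (2 * z1 - z)))); f_equal; ring).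
  destruct (sign_cases a Ha) as [-> | ->]; field.
Qed.

Lemma parity_part_sym0 q z1 z0 a b : b * b = 1 ->
  forall z, parity_part z1 z0 a b q (2 * z0 - z) = b * parity_part z1 z0 a b q z.
Proof.
  intros Hb z. unfold parity_part. replace (2 * z0 - (2 * z0 - z)) with z by ring.
  destruct (sign_cases b Hb) as [-> | ->]; field.
Qed.

Lemma parity_part_sum q z1 z0 z :
  parity_part z1 z0 1 1 q z + parity_part z1 z0 (-1) 1 q z +
  parity_part z1 z0 1 (-1) q z + parity_part z1 z0 (-1) (-1) q z = q z.
Proof. unfold parity_part. field. Qed.

Lemma nontrivial_or_zero (p : R -> R) : (exists z, p z <> 0) \/ (forall z, p z = 0).
Proof.
  destruct (classic (exists z, p z <> 0)) as [|Hno]; [now left|right].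
  intros z. apply NNPP. intros Hz. apply Hno. now exists z.
Qed.

Set Implicit Arguments.
Record symmetric_hill (V : R -> R) (M z1 z0 mu0 mu2 : R) (q0 u s : R -> R) : Prop := {
  sh_bounded : forall z, Rabs (V z) <= M;
  sh_order : z1 < z0;
  sh_sym1 : forall z, V (2 * z1 - z) = V z;
  sh_sym0 : forall z, V (2 * z0 - z) = V z;
  sh_eig_q0 : hill_solution V mu0 q0;
  sh_eig_u : hill_solution V 0 u;
  sh_eig_s : hill_solution V mu2 s;
  sh_signs : mu2 < 0 < mu0;
  sh_q0_nonzero : forall z, q0 z <> 0;
  sh_q0_crit1 : Derive q0 z1 = 0;
  sh_q0_crit0 : Derive q0 z0 = 0;
  sh_u_zero1 : u z1 = 0;
  sh_u_zero2 : u (2 * z0 - z1) = 0;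
  sh_u_deriv1 : Derive u z1 <> 0;
  sh_u_nonzero : forall z, z1 < z < 2 * z0 - z1 -> u z <> 0;
  sh_s_nonzero : forall z, 2 * z1 - z0 < z < z0 -> s z <> 0
}.
Unset Implicit Arguments.

Section SymmetricHill.

Variables (V : R -> R) (M z1 z0 mu0 mu2 : R) (q0 u s : R -> R).
Hypothesis HS : symmetric_hill V M z1 z0 mu0 mu2 q0 u s.

Let sturm := sturm_comparison V M (sh_bounded HS).

Lemma even_even_eigenfunction mu q : hill_solution V mu q ->
  (forall z, q (2 * z1 - z) = q z) -> (forall z, q (2 * z0 - z) = q z) ->
  (exists z, q z <> 0) ->
  (mu = mu0 /\ exists al, forall z, q z = al * q0 z) \/ mu <= mu2.
Proof.
  intros Sq E1 E0 Hnt.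
  assert (Hdq : forall z, ex_derive q z) by (intros z; apply (proj1 Sq)).
  assert (HW1 : wronskian q q0 z1 = 0)
    by (unfold wronskian; rewrite (sh_q0_crit1 HS), (Derive_reflect_sym_zero q z1 (Hdq z1) E1); ring).
  assert (HW0 : wronskian q q0 z0 = 0)
    by (unfold wronskian; rewrite (sh_q0_crit0 HS), (Derive_reflect_sym_zero q z0 (Hdq z0) E0); ring).
  destruct (Req_dec mu mu0) as [->|Hne].
  - left. split; [reflexivity|].
    apply (hill_wronskian_zero_proportional V M (sh_bounded HS) mu0 q q0 z1 Sq (sh_eig_q0 HS) HW1).
    left. apply (sh_q0_nonzero HS).
  - right.
    destruct (MVT_cor2 (wronskian q q0) (fun t => (mu - mu0) * q t * q0 t) z1 z0 (sh_order HS))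
      as [c [Hc Hcz]].
    { intros c _. apply is_derive_Reals, (is_derive_wronskian V); [exact Sq | apply (sh_eig_q0 HS)]. }
    rewrite HW1, HW0 in Hc.
    assert (Hqc : q c = 0).
    { assert (Hprod : (mu - mu0) * q c * q0 c = 0)
        by (apply Rmult_eq_reg_r with (z0 - z1); [lra | pose proof (sh_order HS); lra]).
      apply Rmult_integral in Hprod. destruct Hprod as [Hprod|Hprod];
        [| exfalso; exact (sh_q0_nonzero HS c Hprod)].
      apply Rmult_integral in Hprod. destruct Hprod; [lra | assumption]. }
    apply (sturm mu mu2 q s (2 * z1 - c) c Sq (sh_eig_s HS));
      [lra | now rewrite E1 | exact Hqc | exact Hnt |].
    intros z Hz. apply (sh_s_nonzero HS). lra.
Qed.

Lemma odd_even_eigenfunction mu q : hill_solution V mu q ->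
  (forall z, q (2 * z1 - z) = - q z) -> (forall z, q (2 * z0 - z) = q z) ->
  (exists z, q z <> 0) ->
  (mu = 0 /\ exists al, forall z, q z = al * u z) \/ mu <= mu2.
Proof.
  intros Sq E1 E0 Hnt. pose proof (sh_order HS) as H01.
  assert (Hq1 : q z1 = 0) by (specialize (E1 z1); replace (2 * z1 - z1) with z1 in E1 by ring; lra).
  assert (Hq2 : q (2 * z0 - z1) = 0) by (rewrite E0; exact Hq1).
  assert (Hle : mu <= 0)
    by (apply (sturm mu 0 q u z1 (2 * z0 - z1) Sq (sh_eig_u HS)); auto; [lra | apply (sh_u_nonzero HS)]).
  destruct (Req_dec mu 0) as [->|Hne].
  - left. split; [reflexivity|].
    apply (hill_wronskian_zero_proportional V M (sh_bounded HS) 0 q u z1 Sq (sh_eig_u HS)).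
    + unfold wronskian. rewrite Hq1, (sh_u_zero1 HS). ring.
    + right. apply (sh_u_deriv1 HS).
  - right.
    assert (Hc : exists c, z1 < c < 2 * z0 - z1 /\ q c = 0).
    { apply NNPP. intros Hno.
      enough (0 <= mu) by lra.
      apply (sturm 0 mu u q z1 (2 * z0 - z1) (sh_eig_u HS) Sq); [lra | apply (sh_u_zero1 HS)
        | apply (sh_u_zero2 HS) | exists ((z1 + z0) / 2); apply (sh_u_nonzero HS); lra |].
      intros z Hz Hqz. apply Hno. exists z. auto. }
    destruct Hc as [c [Hc Hqc]]. destruct (Rle_or_lt c z0).
    + apply (sturm mu mu2 q s z1 c Sq (sh_eig_s HS)); auto; [lra|].
      intros z Hz. apply (sh_s_nonzero HS). lra.
    + apply (sturm mu mu2 q s z1 (2 * z0 - c) Sq (sh_eig_s HS)); auto; [lra | now rewrite E0 |].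
      intros z Hz. apply (sh_s_nonzero HS). lra.
Qed.

Lemma odd_odd_eigenvalue_le mu q : hill_solution V mu q ->
  (forall z, q (2 * z1 - z) = - q z) -> (forall z, q (2 * z0 - z) = - q z) ->
  (exists z, q z <> 0) -> mu <= mu2.
Proof.
  intros Sq E1 E0 Hnt. pose proof (sh_order HS).
  assert (Hq1 : q z1 = 0) by (specialize (E1 z1); replace (2 * z1 - z1) with z1 in E1 by ring; lra).
  assert (Hq0 : q z0 = 0) by (specialize (E0 z0); replace (2 * z0 - z0) with z0 in E0 by ring; lra).
  apply (sturm mu mu2 q s z1 z0 Sq (sh_eig_s HS)); auto.
  intros z Hz. apply (sh_s_nonzero HS). lra.
Qed.

Lemma even_odd_eigenvalue_le mu q : hill_solution V mu q ->
  (forall z, q (2 * z1 - z) = q z) -> (forall z, q (2 * z0 - z) = - q z) ->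
  (exists z, q z <> 0) -> mu <= mu2.
Proof.
  intros Sq E1 E0 Hnt. pose proof (sh_order HS).
  assert (Hq0 : q z0 = 0) by (specialize (E0 z0); replace (2 * z0 - z0) with z0 in E0 by ring; lra).
  apply (sturm mu mu2 q s (2 * z1 - z0) z0 Sq (sh_eig_s HS)); auto; [lra | now rewrite E1 |].
  intros z Hz. apply (sh_s_nonzero HS). lra.
Qed.

Section Parts.

Variables (mu : R) (q : R -> R).
Hypothesis Sq : hill_solution V mu q.
Hypothesis q_periodic : forall z, q (z + 4 * (z0 - z1)) = q z.

Lemma parity_part_hill a b : hill_solution V mu (parity_part z1 z0 a b q).
Proof. apply parity_part_solution; [apply (sh_sym1 HS) | apply (sh_sym0 HS) | exact Sq]. Qed.

Lemma parity_part_odd0_zero a : a * a = 1 -> mu2 < mu -> forall z, parity_part z1 z0 a (-1) q z = 0.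
Proof.
  intros Ha Hmu.
  destruct (nontrivial_or_zero (parity_part z1 z0 a (-1) q)) as [Hn|]; [exfalso|assumption].
  assert (Hodd0 : forall z, parity_part z1 z0 a (-1) q (2 * z0 - z) = - parity_part z1 z0 a (-1) q z)
    by (intros z; rewrite parity_part_sym0 by ring; ring).
  enough (mu <= mu2) by lra.
  destruct (sign_cases a Ha) as [->| ->].
  - apply (even_odd_eigenvalue_le mu _ (parity_part_hill 1 (-1))); [|exact Hodd0|exact Hn].
    intros z. rewrite (parity_part_sym1 q z1 z0 _ _ q_periodic) by ring. ring.
  - apply (odd_odd_eigenvalue_le mu _ (parity_part_hill (-1) (-1))); [|exact Hodd0|exact Hn].
    intros z. rewrite (parity_part_sym1 q z1 z0 _ _ q_periodic) by ring. ring.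
Qed.

Lemma parity_part_even_even : (exists z, parity_part z1 z0 1 1 q z <> 0) -> mu2 < mu ->
  mu = mu0 /\ exists al, forall z, parity_part z1 z0 1 1 q z = al * q0 z.
Proof.
  intros Hn Hmu.
  destruct (even_even_eigenfunction mu _ (parity_part_hill 1 1)) as [Hc|Hc];
    [intros z; rewrite (parity_part_sym1 q z1 z0 _ _ q_periodic) by ring; ring
    | intros z; rewrite parity_part_sym0 by ring; ring | exact Hn | exact Hc | lra].
Qed.

Lemma parity_part_odd_even : (exists z, parity_part z1 z0 (-1) 1 q z <> 0) -> mu2 < mu ->
  mu = 0 /\ exists al, forall z, parity_part z1 z0 (-1) 1 q z = al * u z.
Proof.
  intros Hn Hmu.
  destruct (odd_even_eigenfunction mu _ (parity_part_hill (-1) 1)) as [Hc|Hc];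
    [intros z; rewrite (parity_part_sym1 q z1 z0 _ _ q_periodic) by ring; ring
    | intros z; rewrite parity_part_sym0 by ring; ring | exact Hn | exact Hc | lra].
Qed.

End Parts.

Lemma symmetric_hill_classify mu q : hill_solution V mu q ->
  (forall z, q (z + 4 * (z0 - z1)) = q z) -> (exists z, q z <> 0) ->
  (mu = mu0 /\ exists al, forall z, q z = al * q0 z) \/
  (mu = 0 /\ exists al, forall z, q z = al * u z) \/ mu <= mu2.
Proof.
  intros Sq Hp Hnt. pose proof (sh_signs HS).
  destruct (Rle_or_lt mu mu2) as [|Hgt]; [right; right; assumption|].
  assert (Hsum : forall z, q z = parity_part z1 z0 1 1 q z + parity_part z1 z0 (-1) 1 q z).
  { intros z. rewrite <- (parity_part_sum q z1 z0 z),
      (parity_part_odd0_zero mu q Sq Hp 1 ltac:(ring) Hgt),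
      (parity_part_odd0_zero mu q Sq Hp (-1) ltac:(ring) Hgt).
    ring. }
  destruct (nontrivial_or_zero (parity_part z1 z0 1 1 q)) as [N1|T1],
    (nontrivial_or_zero (parity_part z1 z0 (-1) 1 q)) as [N2|T2].
  - destruct (parity_part_even_even mu q Sq Hp N1 Hgt), (parity_part_odd_even mu q Sq Hp N2 Hgt).
    lra.
  - left. destruct (parity_part_even_even mu q Sq Hp N1 Hgt) as [Hmu [al Hal]].
    split; [exact Hmu|]. exists al. intros z. rewrite Hsum, T2, Hal. ring.
  - right; left. destruct (parity_part_odd_even mu q Sq Hp N2 Hgt) as [Hmu [al Hal]].
    split; [exact Hmu|]. exists al. intros z. rewrite Hsum, T1, Hal. ring.
  - exfalso. destruct Hnt as [z Hz]. apply Hz. rewrite Hsum, T1, T2. ring.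
Qed.

End SymmetricHill.

Lemma fundamental_period_shift f T C : fundamental_period f T ->
  fundamental_period (fun z => f z + C) T.
Proof.
  intros [HT [Hp Hmin]]. split; [exact HT|]. split.
  - intros z. destruct (Hp z) as [k Hk]. exists k. rewrite Hk. ring.
  - intros T' HT' Hp'. apply (Hmin T' HT'). intros z. destruct (Hp' z) as [k Hk]. exists k. lra.
Qed.

Lemma fundamental_period_periodic h T : fundamental_period h T ->
  (forall z, -PI < h z < PI) -> forall z, h (z + T) = h z.
Proof.
  intros [HT [Hp _]] Hr z. destruct (Hp z) as [k Hk].
  assert (Hk0 : k = 0%Z).
  { pose proof (Hr z). pose proof (Hr (z + T)). pose proof PI_RGT_0.
    assert (-1 < IZR k < 1) as [Hlo Hhi]
      by (split; apply Rmult_lt_reg_r with (2 * PI); nra).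
    apply lt_IZR in Hlo. apply lt_IZR in Hhi. lia. }
  rewrite Hk, Hk0. simpl. ring.
Qed.

Lemma Derive_periodic (h : R -> R) T : (forall z, ex_derive h z) ->
  (forall z, h (z + T) = h z) -> forall z, Derive h (z + T) = Derive h z.
Proof.
  intros Hh Hp z. rewrite <- (Derive_ext (fun t => h (t + T)) h z Hp).
  symmetry. apply is_derive_unique, is_derive_shift, Hh.
Qed.

Lemma periodic_max_crit (h : R -> R) T : (forall z, ex_derive h z) -> 0 < T ->
  (forall z, h (z + T) = h z) ->
  exists z1, 0 <= z1 <= T /\ (forall c, 0 <= c <= T -> h c <= h z1) /\ Derive h z1 = 0.
Proof.
  intros Hh HT Hp.
  destruct (continuity_ab_maj h 0 T) as [z1 [Hmax Hz1]];
    [lra | intros c _; apply ex_derive_continuity_pt, Hh|].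
  exists z1. split; [exact Hz1|]. split; [exact Hmax|].
  assert (Hloc : forall x, z1 - T < x -> x < z1 + T -> h x <= h z1).
  { intros x H1 H2. destruct (Rlt_or_le x 0).
    - rewrite <- Hp. apply Hmax. lra.
    - destruct (Rle_or_lt x T); [apply Hmax; lra|].
      replace x with ((x - T) + T) by ring. rewrite Hp. apply Hmax. lra. }
  assert (pr := ex_derive_Reals_0 h z1 (Hh z1)).
  rewrite <- (Derive_Reals h z1 pr).
  apply (deriv_maximum h (z1 - T) (z1 + T) z1 pr); lra || auto.
Qed.

Definition pendulum (gam E : R) (h : R -> R) :=
  C2 h /\ (forall z, Derive (Derive h) z = - gam * sin (h z)) /\
  (forall z, (Derive h z) ^ 2 = 2 * gam * (E - 1 + cos (h z))).

Lemma sin_lipschitz x y : Rabs (sin x - sin y) <= Rabs (x - y).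
Proof.
  destruct (MVT_abs sin cos y x) as [c [Hc _]]; [intros; apply derivable_pt_lim_sin|].
  rewrite Hc. pose proof (COS_bound c).
  assert (Rabs (cos c) <= 1) by (apply Rabs_le; lra).
  pose proof (Rabs_pos (x - y)). nra.
Qed.

Lemma sin_nonzero_range x : -PI < x < PI -> x <> 0 -> sin x <> 0.
Proof.
  intros Hx Hx0. destruct (Rtotal_order x 0) as [Hl|[He|Hg]].
  - pose proof (sin_lt_0_var x ltac:(lra) Hl). lra.
  - contradiction.
  - assert (0 < sin x) by (apply sin_gt_0; lra). lra.
Qed.

Lemma reflect_C2 (h : R -> R) c al : C2 h ->
  C2 (fun z => al * h (2 * c - z)) /\
  (forall z, Derive (fun z => al * h (2 * c - z)) z = - al * Derive h (2 * c - z)) /\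
  (forall z, Derive (Derive (fun z => al * h (2 * c - z))) z = al * Derive (Derive h) (2 * c - z)).
Proof.
  intros Hh.
  assert (HD1 : forall t, is_derive (fun z => al * h (2 * c - z)) t (- al * Derive h (2 * c - t))).
  { intros t. replace (- al * Derive h (2 * c - t)) with (al * - Derive h (2 * c - t)) by ring.
    apply is_derive_scal, is_derive_reflect, Hh. }
  assert (HD : forall t, Derive (fun z => al * h (2 * c - z)) t = - al * Derive h (2 * c - t))
    by (intros t; apply is_derive_unique, HD1).
  assert (HD2 : forall t, is_derive (fun z => - al * Derive h (2 * c - z)) t
                            (al * Derive (Derive h) (2 * c - t))).
  { intros t. replace (al * Derive (Derive h) (2 * c - t))
      with (- al * - Derive (Derive h) (2 * c - t)) by ring.
    apply is_derive_scal, is_derive_reflect, Hh. }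
  split; [|split; [exact HD|]].
  - intros z. split; [eexists; apply HD1|].
    apply (ex_derive_ext (fun t => - al * Derive h (2 * c - t))); [intros t; now rewrite HD|].
    eexists. apply HD2.
  - intros z. rewrite (Derive_ext _ _ z HD). apply is_derive_unique, HD2.
Qed.

Lemma reflections_periodic (h : R -> R) z1 z0 :
  (forall z, h (2 * z1 - z) = h z) -> (forall z, h (2 * z0 - z) = - h z) ->
  forall z, h (z + 4 * (z0 - z1)) = h z.
Proof.
  intros S1 S0.
  assert (Hanti : forall v, h (v + 2 * (z0 - z1)) = - h v).
  { intros v. replace (v + 2 * (z0 - z1)) with (2 * z0 - (2 * z1 - v)) by ring. now rewrite S0, S1. }
  intros z. replace (z + 4 * (z0 - z1)) with ((z + 2 * (z0 - z1)) + 2 * (z0 - z1)) by ring.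
  rewrite !Hanti. ring.
Qed.

Lemma Derive_odd_reflect (h : R -> R) c : (forall z, ex_derive h z) ->
  (forall z, h (2 * c - z) = - h z) -> forall z, Derive h (2 * c - z) = Derive h z.
Proof.
  intros Hh Hodd z.
  assert (Hext : forall t, - h (2 * c - t) = h t) by (intros t; rewrite Hodd; ring).
  rewrite <- (Derive_ext _ _ z Hext).
  replace (Derive (fun t => - h (2 * c - t)) z) with (- - Derive h (2 * c - z))
    by (symmetry; apply is_derive_unique, (is_derive_opp (fun t => h (2 * c - t))),
        is_derive_reflect, Hh).
  ring.
Qed.

Section Pendulum.

Variables (gam E : R) (h : R -> R).
Hypothesis h_pendulum : pendulum gam E h.

Let h_C2 : C2 h := proj1 h_pendulum.
Let h_eq : forall z, Derive (Derive h) z = - gam * sin (h z) := proj1 (proj2 h_pendulum).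
Let h_energy : forall z, (Derive h z) ^ 2 = 2 * gam * (E - 1 + cos (h z)) := proj2 (proj2 h_pendulum).

Lemma pendulum_unique (g : R -> R) a : C2 g ->
  (forall z, Derive (Derive g) z = - gam * sin (g z)) ->
  g a = h a -> Derive g a = Derive h a -> forall z, h z = g z.
Proof.
  intros Hg Eg Ha Hda z. symmetry.
  apply (ode2_unique (fun _ x => - gam * sin x) (Rabs gam) g h a); auto.
  intros _ x y. rewrite <- Rmult_minus_distr_l, Rabs_mult, Rabs_Ropp.
  apply Rmult_le_compat_l; [apply Rabs_pos | apply sin_lipschitz].
Qed.

Lemma pendulum_reflect_crit c : Derive h c = 0 -> forall z, h (2 * c - z) = h z.
Proof.
  intros Hc z. destruct (reflect_C2 h c 1 h_C2) as [R1 [R2 R3]].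
  assert (Hcc : 2 * c - c = c) by ring.
  assert (Hsym : forall t, h t = 1 * h (2 * c - t)).
  { apply (pendulum_unique _ c R1).
    - intros t. rewrite R3, !h_eq. cbv beta. now rewrite !Rmult_1_l.
    - rewrite Hcc. ring.
    - rewrite R2, Hcc, Hc. ring. }
  rewrite (Hsym z). ring.
Qed.

Lemma pendulum_reflect_zero c : h c = 0 -> forall z, h (2 * c - z) = - h z.
Proof.
  intros Hc z. destruct (reflect_C2 h c (-1) h_C2) as [R1 [R2 R3]].
  assert (Hcc : 2 * c - c = c) by ring.
  assert (Hsym : forall t, h t = -1 * h (2 * c - t)).
  { apply (pendulum_unique _ c R1).
    - intros t. rewrite R3, !h_eq. cbv beta.
      replace (-1 * h (2 * c - t)) with (- h (2 * c - t)) by ring. rewrite sin_neg. ring.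
    - rewrite Hcc, Hc. ring.
    - rewrite R2, Hcc. ring. }
  rewrite (Hsym (2 * c - z)). replace (2 * c - (2 * c - z)) with z by ring. ring.
Qed.

Let h_double_angle z : sin (h z) = 2 * sin (h z / 2) * cos (h z / 2) /\
                        cos (h z) = 1 - 2 * sin (h z / 2) * sin (h z / 2).
Proof.
  split; [rewrite <- sin_2a | rewrite <- cos_2a_sin]; f_equal; field.
Qed.

Let h_is_derive z : is_derive h z (Derive h z) := Derive_correct _ _ (proj1 (h_C2 z)).
Let h'_is_derive z : is_derive (Derive h) z (- gam * sin (h z)).
Proof. rewrite <- h_eq. apply Derive_correct, h_C2. Qed.

Let cos_half_is_derive (z : R) :
  is_derive (fun t : R => cos (h t / 2)) z (- sin (h z / 2) * (Derive h z / 2)).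
Proof. auto_derive; [apply h_C2|]. change (fun x : R => h x) with h. unfold Rdiv. ring. Qed.

Lemma pendulum_eigen_derive : hill_solution (fun z => gam * cos (h z)) 0 (Derive h).
Proof.
  apply (hill_solution_intro _ _ _ _ (fun z => - gam * (Derive h z * cos (h z))) h'_is_derive).
  - intros z. apply is_derive_scal.
    apply (is_derive_comp sin h z (cos (h z)) (Derive h z)); [apply is_derive_sin | apply h_is_derive].
  - intros z. ring.
Qed.

Lemma pendulum_eigen_cos_half :
  hill_solution (fun z => gam * cos (h z)) (gam * (1 - E / 2)) (fun z => cos (h z / 2)).
Proof.
  apply (hill_solution_intro _ _ _ (fun z => - sin (h z / 2) * (Derive h z / 2))
           (fun z => - cos (h z / 2) * (Derive h z / 2) * (Derive h z / 2)
                     - sin (h z / 2) * (- gam * sin (h z) / 2)) cos_half_is_derive).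
  - intros z. auto_derive; [repeat split; apply h_C2|].
    change (fun x : R => h x) with h. change (fun x : R => Derive h x) with (Derive h).
    rewrite h_eq. unfold Rdiv. ring.
  - intros z. destruct (h_double_angle z) as [Hs Hc]. pose proof (h_energy z) as Hen.
    rewrite Hs, Hc. rewrite Hc in Hen.
    set (S := sin (h z / 2)) in *. set (C := cos (h z / 2)) in *. set (d := Derive h z) in *.
    replace (- C * (d / 2) * (d / 2)) with (- C * (d ^ 2) / 4) by field. rewrite Hen. field.
Qed.

Lemma pendulum_eigen_sin_half :
  hill_solution (fun z => gam * cos (h z)) (- gam * E / 2) (fun z => sin (h z / 2)).
Proof.
  apply (hill_solution_intro _ _ _ (fun z => cos (h z / 2) * (Derive h z / 2))
           (fun z => - sin (h z / 2) * (Derive h z / 2) * (Derive h z / 2)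
                     + cos (h z / 2) * (- gam * sin (h z) / 2))).
  - intros z. auto_derive; [apply h_C2|]. change (fun x : R => h x) with h. unfold Rdiv. ring.
  - intros z. auto_derive; [repeat split; apply h_C2|].
    change (fun x : R => h x) with h. change (fun x : R => Derive h x) with (Derive h).
    rewrite h_eq. unfold Rdiv. ring.
  - intros z. destruct (h_double_angle z) as [Hs Hc]. pose proof (h_energy z) as Hen.
    pose proof (sin2_cos2 (h z / 2)) as Hpyth. unfold Rsqr in Hpyth.
    rewrite Hs, Hc. rewrite Hc in Hen.
    set (S := sin (h z / 2)) in *. set (C := cos (h z / 2)) in *. set (d := Derive h z) in *.
    replace (- S * (d / 2) * (d / 2)) with (- S * (d ^ 2) / 4) by field. rewrite Hen.
    replace (C * (- gam * (2 * S * C) / 2)) with (- gam * S * (C * C)) by field.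
    replace (C * C) with (1 - S * S) by lra. field.
Qed.

Hypothesis gam_pos : 0 < gam.
Hypothesis E_range : 0 < E < 2.
Hypothesis h_range : forall z, -PI < h z < PI.

Let h_continuous x : continuity_pt h x := ex_derive_continuity_pt h x (proj1 (h_C2 x)).

Lemma pendulum_crit_cos c : Derive h c = 0 -> cos (h c) = 1 - E.
Proof.
  intros Hc. pose proof (h_energy c) as Hen. rewrite Hc in Hen.
  apply Rmult_eq_reg_l with (2 * gam); nra.
Qed.

Lemma pendulum_crit_nonzero c : Derive h c = 0 -> h c <> 0.
Proof. intros Hc H0. pose proof (pendulum_crit_cos c Hc) as Hcos. rewrite H0, cos_0 in Hcos. lra. Qed.

Lemma pendulum_concave_pos z : 0 < h z -> Derive (Derive h) z < 0.
Proof.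
  intros Hz. rewrite h_eq.
  assert (0 < sin (h z)) by (apply sin_gt_0; [exact Hz | apply h_range]). nra.
Qed.

Lemma pendulum_convex_neg z : h z < 0 -> 0 < Derive (Derive h) z.
Proof.
  intros Hz. rewrite h_eq.
  pose proof (sin_lt_0_var (h z) (proj1 (h_range z)) Hz). nra.
Qed.

Variable T : R.
Hypothesis h_fundamental : fundamental_period h T.

Let T_pos : 0 < T := proj1 h_fundamental.
Let h_periodic : forall z, h (z + T) = h z := fundamental_period_periodic h T h_fundamental h_range.

(* Otherwise h' would be strictly monotone over a whole period. *)
Lemma pendulum_zero_in_period a : exists w, a < w < a + T /\ h w = 0.
Proof.
  apply NNPP. intros Hno.
  assert (Hnz : forall z, a < z < a + T -> h z <> 0) by (intros z Hz H0; apply Hno; now exists z).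
  assert (Hdp := Derive_periodic h T (fun z => proj1 (h_C2 z)) h_periodic a).
  assert (HD2 : forall x, is_derive (Derive h) x (Derive (Derive h) x))
    by (intros x; apply Derive_correct, h_C2).
  destruct (nonzero_sign_const h a (a + T) h_continuous Hnz) as [Hpos|Hneg].
  - pose proof (derive_neg_decr (Derive h) _ a (a + T) ltac:(lra) HD2
                  (fun x Hx => pendulum_concave_pos x (Hpos x Hx))). lra.
  - pose proof (derive_pos_incr (Derive h) _ a (a + T) ltac:(lra) HD2
                  (fun x Hx => pendulum_convex_neg x (Hneg x Hx))). lra.
Qed.

Lemma pendulum_first_descent z1 : Derive h z1 = 0 -> 0 < h z1 ->
  exists z0, z1 < z0 /\ h z0 = 0 /\ (forall z, z1 <= z < z0 -> 0 < h z) /\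
    (forall z, z1 < z <= z0 -> Derive h z < 0).
Proof.
  intros Hd1 Hh1.
  destruct (pendulum_zero_in_period z1) as [w [Hw Hhw]].
  destruct (first_zero_after h z1 w h_continuous ltac:(lra) Hhw) as [z0 [Hz0 [Hhz0 Hnz]]].
  { destruct (continuity_pt_pos_near h z1 (h_continuous z1) Hh1) as [del [Hdel Hn]].
    exists del. split; [exact Hdel|]. intros z Hz. specialize (Hn z ltac:(apply Rabs_def1; lra)). lra. }
  assert (Hpos : forall z, z1 <= z < z0 -> 0 < h z).
  { destruct (nonzero_sign_const h z1 z0 h_continuous Hnz) as [P|N].
    - intros z Hz. destruct (Req_dec z z1) as [->|]; [exact Hh1 | apply P; lra].
    - exfalso. destruct (continuity_pt_pos_near h z1 (h_continuous z1) Hh1) as [del [Hdel Hn]].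
      destruct (exists_pos_below del (z0 - z1) Hdel ltac:(lra)) as [e He].
      specialize (Hn (z1 + e) ltac:(apply Rabs_def1; lra)). specialize (N (z1 + e) ltac:(lra)). lra. }
  exists z0. repeat split; [lra | exact Hhz0 | exact Hpos |].
  intros z Hz. rewrite <- Hd1.
  apply (derive_neg_decr (Derive h) (Derive (Derive h)) z1 z);
    [lra | intros x; apply Derive_correct, h_C2|].
  intros x Hx. apply pendulum_concave_pos, Hpos. lra.
Qed.

Lemma pendulum_max_pos z1 : 0 <= z1 <= T -> (forall c, 0 <= c <= T -> h c <= h z1) ->
  Derive h z1 = 0 -> 0 < h z1.
Proof.
  intros Hz1 Hmax Hd1. pose proof (pendulum_crit_nonzero z1 Hd1).
  destruct (Rlt_or_le 0 (h z1)) as [|Hle]; [assumption|]. exfalso.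
  destruct (pendulum_zero_in_period 0) as [w [Hw Hhw]].
  specialize (Hmax w ltac:(lra)). lra.
Qed.

Lemma pendulum_quarter_period : exists z1 z0, T = 4 * (z0 - z1) /\ z1 < z0 /\
  Derive h z1 = 0 /\ h z0 = 0 /\
  (forall z, z1 < z < 2 * z0 - z1 -> Derive h z <> 0) /\
  (forall z, 2 * z1 - z0 < z < z0 -> h z <> 0).
Proof.
  destruct (periodic_max_crit h T (fun z => proj1 (h_C2 z)) T_pos h_periodic) as [z1 [Hz1 [Hmax Hd1]]].
  destruct (pendulum_first_descent z1 Hd1 (pendulum_max_pos z1 Hz1 Hmax Hd1))
    as [z0 [H01 [Hhz0 [Hpos Hdneg]]]].
  assert (Sym1 := pendulum_reflect_crit z1 Hd1).
  assert (Sym0 := pendulum_reflect_zero z0 Hhz0).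
  assert (Hper := reflections_periodic h z1 z0 Sym1 Sym0).
  assert (Hdsym0 := Derive_odd_reflect h z0 (fun z => proj1 (h_C2 z)) Sym0).
  assert (Hlt : forall v, z1 < v <= 2 * z0 - z1 -> h v < h z1).
  { intros v Hv. destruct (Rle_or_lt v z0).
    - apply (derive_neg_decr h (Derive h) z1 v); [lra | intros x; apply Derive_correct, h_C2|].
      intros x Hx. apply Hdneg. lra.
    - pose proof (Sym0 v). pose proof (Hpos (2 * z0 - v) ltac:(lra)).
      pose proof (Hpos z1 ltac:(lra)). lra. }
  assert (Hlt_period : forall v, z1 < v < z1 + 4 * (z0 - z1) -> h v < h z1).
  { intros v Hv. destruct (Rle_or_lt v (2 * z0 - z1)); [apply Hlt; lra|].
    rewrite <- Sym1, <- Hper. apply Hlt. lra. }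
  assert (HT : T = 4 * (z0 - z1)).
  { destruct (Rtotal_order T (4 * (z0 - z1))) as [Hl|[He|Hg]]; [exfalso| exact He | exfalso].
    - specialize (Hlt_period (z1 + T) ltac:(lra)). rewrite h_periodic in Hlt_period. lra.
    - apply (proj2 (proj2 h_fundamental) (4 * (z0 - z1))); [lra|].
      intros z. exists 0%Z. rewrite Hper. simpl. ring. }
  exists z1, z0. repeat split; [exact HT | exact H01 | exact Hd1 | exact Hhz0 | |].
  - intros z Hz. destruct (Rle_or_lt z z0).
    + pose proof (Hdneg z ltac:(lra)). lra.
    + rewrite <- Hdsym0. pose proof (Hdneg (2 * z0 - z) ltac:(lra)). lra.
  - intros z Hz. destruct (Rle_or_lt z1 z).
    + pose proof (Hpos z ltac:(lra)). lra.
    + rewrite <- Sym1. pose proof (Hpos (2 * z1 - z) ltac:(lra)). lra.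
Qed.

Lemma pendulum_symmetric_hill : exists z1 z0, T = 4 * (z0 - z1) /\
  symmetric_hill (fun z => gam * cos (h z)) gam z1 z0 (gam * (1 - E / 2)) (- gam * E / 2)
    (fun z => cos (h z / 2)) (Derive h) (fun z => sin (h z / 2)).
Proof.
  destruct pendulum_quarter_period as [z1 [z0 [HT [H01 [Hd1 [Hz0 [Hu Hs]]]]]]].
  assert (Sym1 := pendulum_reflect_crit z1 Hd1).
  assert (Sym0 := pendulum_reflect_zero z0 Hz0).
  assert (Hh1 := pendulum_crit_nonzero z1 Hd1).
  exists z1, z0. split; [exact HT|]. split.
  - intros z. rewrite Rabs_mult, (Rabs_right gam) by lra.
    rewrite <- (Rmult_1_r gam) at 2. apply Rmult_le_compat_l; [lra|].
    apply Rabs_le, COS_bound.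
  - exact H01.
  - intros z. now rewrite Sym1.
  - intros z. now rewrite Sym0, cos_neg.
  - exact pendulum_eigen_cos_half.
  - exact pendulum_eigen_derive.
  - exact pendulum_eigen_sin_half.
  - split; [|nra]. assert (0 < gam * E) by nra. lra.
  - intros z. assert (0 < cos (h z / 2)); [|lra].
    pose proof (h_range z). apply cos_gt_0; lra.
  - rewrite (is_derive_unique _ _ _ (cos_half_is_derive z1)), Hd1. lra.
  - rewrite (is_derive_unique _ _ _ (cos_half_is_derive z0)), Hz0.
    replace (0 / 2) with 0 by field. rewrite sin_0. lra.
  - exact Hd1.
  - rewrite (Derive_odd_reflect h z0 (fun z => proj1 (h_C2 z)) Sym0). exact Hd1.
  - rewrite h_eq. apply Rmult_integral_contrapositive. split; [lra|].
    apply sin_nonzero_range; [apply h_range | exact Hh1].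
  - exact Hu.
  - intros z Hz. pose proof (h_range z). apply sin_nonzero_range; [lra|].
    intros H0. apply (Hs z Hz). lra.
Qed.

End Pendulum.

Lemma pendulum_shift gam E gam' E' h C : pendulum gam E h ->
  (forall x, gam' * sin (x + C) = gam * sin x) ->
  (forall x, gam' * (E' - 1 + cos (x + C)) = gam * (E - 1 + cos x)) ->
  pendulum gam' E' (fun z => h z + C).
Proof.
  intros [Hh [Heq Hen]] Hs Hc.
  assert (D1 : forall z, is_derive (fun t => h t + C) z (Derive h z)).
  { intros z. rewrite <- (Rplus_0_r (Derive h z)).
    apply (is_derive_plus h (fun _ => C) z); [apply Derive_correct, Hh | exact (is_derive_const C z)]. }
  assert (HD : forall z, Derive (fun t => h t + C) z = Derive h z)
    by (intros z; apply is_derive_unique, D1).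
  split; [|split].
  - intros z. split; [eexists; apply D1|].
    apply (ex_derive_ext (Derive h)); [intros t; now rewrite HD | apply Hh].
  - intros z. rewrite (Derive_ext _ _ z HD), Heq. specialize (Hs (h z)). lra.
  - intros z. rewrite HD, Hen. specialize (Hc (h z)). lra.
Qed.

Lemma traveling_wave_pendulum c f E : c ^ 2 <> 1 -> traveling_wave c f -> has_energy c f E ->
  pendulum (/ (c ^ 2 - 1)) E f.
Proof.
  intros Hc [Hf Heq] Hen. assert (Hk : c ^ 2 - 1 <> 0) by lra.
  split; [exact Hf | split]; intros z.
  - specialize (Heq z). apply Rmult_eq_reg_l with (c ^ 2 - 1); [|exact Hk].
    field_simplify; [lra | exact Hk].
  - specialize (Hen z). apply Rmult_eq_reg_l with (c ^ 2 - 1); [|exact Hk].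
    field_simplify; [lra | exact Hk].
Qed.

(* f + pi turns the pendulum with gam < 0 and energy E into one with -gam > 0 and energy 2 - E. *)
Lemma pendulum_normalize gam E f : gam <> 0 -> 0 < E < 2 -> pendulum gam E f ->
  exists gam' E' C, 0 < gam' /\ 0 < E' < 2 /\ pendulum gam' E' (fun z => f z + C) /\
    forall x, gam * cos x = gam' * cos (x + C).
Proof.
  intros Hg HE Hf. destruct (Rlt_or_le 0 gam) as [Hpos|Hneg].
  - exists gam, E, 0. split; [exact Hpos|]. split; [exact HE|]. split.
    + apply (pendulum_shift gam E gam E f 0 Hf); intros x; now rewrite Rplus_0_r.
    + intros x. now rewrite Rplus_0_r.
  - exists (- gam), (2 - E), PI. split; [lra|]. split; [lra|]. split.
    + apply (pendulum_shift gam E (- gam) (2 - E) f PI Hf); intros x;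
        [rewrite neg_sin | rewrite neg_cos]; ring.
    + intros x. rewrite neg_cos. ring.
Qed.

Lemma trig_shift_2kPI x (k : Z) : sin (x + 2 * IZR k * PI) = sin x /\ cos (x + 2 * IZR k * PI) = cos x.
Proof.
  destruct (Z_le_gt_dec 0 k) as [Hk|Hk].
  - rewrite <- (Z2Nat.id k Hk), <- INR_IZR_INZ. split; [apply sin_period | apply cos_period].
  - set (n := Z.to_nat (- k)).
    assert (Hkn : IZR k = - INR n) by (unfold n; rewrite INR_IZR_INZ, Z2Nat.id, opp_IZR by lia; ring).
    rewrite Hkn.
    rewrite <- (sin_period (x + 2 * - INR n * PI) n), <- (cos_period (x + 2 * - INR n * PI) n).
    replace (x + 2 * - INR n * PI + 2 * INR n * PI) with x by ring. split; reflexivity.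
Qed.

Lemma exists_2kPI_shift x : exists k : Z, -PI <= x + 2 * IZR k * PI < PI.
Proof.
  pose proof PI_RGT_0.
  set (r := (x + PI) / (2 * PI)).
  destruct (archimed r) as [Hup1 Hup2].
  exists (1 - up r)%Z. rewrite minus_IZR.
  assert (Hr : x + PI = 2 * PI * r) by (unfold r; field; lra).
  split; nra.
Qed.

Lemma continuity_stays_between (k : R -> R) a b x0 : continuity k -> a < k x0 < b ->
  (forall z, k z <> a /\ k z <> b) -> forall z, a < k z < b.
Proof.
  intros Hk H0 Hab z. split.
  - destruct (Rlt_or_le a (k z)) as [|Hle]; [assumption|]. exfalso.
    destruct (IVT_gen k x0 z a Hk) as [x [_ Hx]]; [|exact (proj1 (Hab x) Hx)].
    split; [apply Rle_trans with (k z); [apply Rmin_r | exact Hle]|].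
    apply Rle_trans with (k x0); [lra | apply Rmax_l].
  - destruct (Rlt_or_le (k z) b) as [|Hle]; [assumption|]. exfalso.
    destruct (IVT_gen k x0 z b Hk) as [x [_ Hx]]; [|exact (proj2 (Hab x) Hx)].
    split; [apply Rle_trans with (k x0); [apply Rmin_l | lra]|].
    apply Rle_trans with (k z); [exact Hle | apply Rmax_r].
Qed.

(* A librational orbit never reaches the inverted position, where cos = -1. *)
Lemma pendulum_branch gam E g : 0 < gam -> E < 2 -> pendulum gam E g ->
  exists C, (forall x, sin (x + C) = sin x /\ cos (x + C) = cos x) /\
    forall z, -PI < g z + C < PI.
Proof.
  intros Hg HE [Hc [_ Hen]].
  assert (Hcos : forall z, -1 < cos (g z)).
  { intros z. specialize (Hen z). pose proof (pow2_ge_0 (Derive g z)). nra. }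
  destruct (exists_2kPI_shift (g 0)) as [k Hk].
  exists (2 * IZR k * PI). split; [intros x; apply trig_shift_2kPI|].
  assert (Havoid : forall z, g z + 2 * IZR k * PI <> - PI /\ g z + 2 * IZR k * PI <> PI).
  { intros z. pose proof (Hcos z) as Hz. rewrite <- (proj2 (trig_shift_2kPI (g z) k)) in Hz.
    split; intros He; rewrite He in Hz; [rewrite cos_neg in Hz|]; rewrite cos_PI in Hz; lra. }
  apply (continuity_stays_between (fun z => g z + 2 * IZR k * PI) (- PI) PI 0).
  - intros x. apply continuity_pt_plus; [apply ex_derive_continuity_pt, Hc | apply continuity_pt_const].
    intros ? ?. reflexivity.
  - split; [|apply Hk]. destruct (proj1 Hk) as [Hlt|Heq]; [exact Hlt|].
    exfalso. apply (proj1 (Havoid 0)). now rewrite Heq.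
  - exact Havoid.
Qed.

Lemma pmult_simple gam f T nu p : periodic_eigenvalue gam f T nu ->
  (forall q, periodic_solution gam f T nu q -> (exists z, q z <> 0) ->
     exists al, forall z, q z = al * p z) ->
  pmult gam f T nu = 1%nat.
Proof.
  intros He Hp. unfold pmult.
  destruct (excluded_middle_informative (periodic_eigenspace_dim_ge2 gam f T nu))
    as [[q1 [q2 [S1 [S2 Hind]]]]|_].
  - exfalso.
    assert (Hnt : forall a b, (a <> 0 \/ b <> 0) -> exists z, a * q1 z + b * q2 z <> 0).
    { intros a b Hab. apply NNPP. intros Hno.
      destruct (Hind a b) as [Ha Hb]; [|tauto].
      intros z. apply NNPP. intros Hz. apply Hno. now exists z. }
    destruct (Hnt 1 0 (or_introl R1_neq_R0)) as [z1 Hz1].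
    destruct (Hnt 0 1 (or_intror R1_neq_R0)) as [z2 Hz2].
    destruct (Hp q1 S1) as [a1 H1]; [exists z1; lra|].
    destruct (Hp q2 S2) as [a2 H2]; [exists z2; lra|].
    assert (Ha1 : a1 <> 0) by (intros ->; apply Hz1; rewrite H1; ring).
    destruct (Hind a2 (- a1)) as [_ Hb]; [intros z; rewrite H1, H2; ring | lra].
  - destruct (excluded_middle_informative (periodic_eigenvalue gam f T nu));
      [reflexivity | contradiction].
Qed.

Lemma pmult_pos gam f T nu : periodic_eigenvalue gam f T nu -> (1 <= pmult gam f T nu)%nat.
Proof.
  intros He. unfold pmult.
  destruct (excluded_middle_informative (periodic_eigenspace_dim_ge2 gam f T nu)); [lia|].
  destruct (excluded_middle_informative (periodic_eigenvalue gam f T nu)); [lia | contradiction].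
Qed.

Section Spectrum.

Variables (gam : R) (f : R -> R) (T mu0 mu2 : R).
Hypothesis signs : mu2 < 0 < mu0.
Hypothesis ev_mu0 : periodic_eigenvalue gam f T mu0.
Hypothesis ev_0 : periodic_eigenvalue gam f T 0.
Hypothesis ev_mu2 : periodic_eigenvalue gam f T mu2.
Hypothesis simple_mu0 : pmult gam f T mu0 = 1%nat.
Hypothesis simple_0 : pmult gam f T 0 = 1%nat.
Hypothesis spectral_gap :
  forall nu, periodic_eigenvalue gam f T nu -> nu = mu0 \/ nu = 0 \/ nu <= mu2.

Lemma count_gt_zero : count_gt gam f T 0 1.
Proof.
  exists (mu0 :: nil). split; [repeat constructor; simpl; tauto|]. split.
  - intros nu. simpl. split.
    + intros [<-|[]]. split; [exact ev_mu0 | lra].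
    + intros [He Hlt]. destruct (spectral_gap nu He) as [|[|]]; [now left | lra | lra].
  - simpl. now rewrite simple_mu0.
Qed.

Lemma count_ge_zero : count_ge gam f T 0 2.
Proof.
  exists (mu0 :: 0 :: nil). split; [repeat constructor; simpl; lra || tauto|]. split.
  - intros nu. simpl. split.
    + intros [<-|[<-|[]]]; split; [exact ev_mu0 | lra | exact ev_0 | lra].
    + intros [He Hle]. destruct (spectral_gap nu He) as [|[|]]; [now left | now right; left | lra].
  - simpl. now rewrite simple_mu0, simple_0.
Qed.

Lemma count_gt_mu2 : count_gt gam f T mu2 2.
Proof.
  exists (mu0 :: 0 :: nil). split; [repeat constructor; simpl; lra || tauto|]. split.
  - intros nu. simpl. split.
    + intros [<-|[<-|[]]]; split; [exact ev_mu0 | lra | exact ev_0 | lra].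
    + intros [He Hlt]. destruct (spectral_gap nu He) as [|[|]]; [now left | now right; left | lra].
  - simpl. now rewrite simple_mu0, simple_0.
Qed.

Lemma count_ge_mu2 : count_ge gam f T mu2 (2 + pmult gam f T mu2).
Proof.
  exists (mu0 :: 0 :: mu2 :: nil). split; [repeat constructor; simpl; lra || tauto|]. split.
  - intros nu. simpl. split.
    + intros [<-|[<-|[<-|[]]]]; split; [exact ev_mu0 | lra | exact ev_0 | lra | exact ev_mu2 | lra].
    + intros [He Hle]. destruct (spectral_gap nu He) as [|[|]];
        [now left | now right; left | right; right; left; lra].
  - simpl. rewrite simple_mu0, simple_0. lia.
Qed.

Lemma periodic_eig_index_spectral_gap :
  periodic_eig_index gam f T 1 0 /\ periodic_eig_index gam f T 2 mu2.
Proof.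
  pose proof (pmult_pos gam f T mu2 ev_mu2). split.
  - exists 1%nat, 2%nat. split; [exact count_gt_zero|]. split; [exact count_ge_zero | lia].
  - exists 2%nat, (2 + pmult gam f T mu2)%nat.
    split; [exact count_gt_mu2|]. split; [exact count_ge_mu2 | lia].
Qed.

End Spectrum.

Lemma periodic_solution_hill gam f T V mu q : (forall z, gam * cos (f z) = V z) ->
  periodic_solution gam f T mu q <-> hill_solution V mu q /\ forall z, q (z + T) = q z.
Proof.
  intros HV. split.
  - intros [Hq [Eq Hp]]. split; [split; [exact Hq|] | exact Hp]. intros z. rewrite <- HV. apply Eq.
  - intros [[Hq Eq] Hp]. split; [exact Hq|]. split; [|exact Hp]. intros z. rewrite HV. apply Eq.
Qed.

Lemma symmetric_hill_eig_index gam f V M z1 z0 mu0 mu2 q0 u s :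
  (forall z, gam * cos (f z) = V z) -> symmetric_hill V M z1 z0 mu0 mu2 q0 u s ->
  (forall z, q0 (z + 4 * (z0 - z1)) = q0 z) -> (forall z, u (z + 4 * (z0 - z1)) = u z) ->
  (forall z, s (z + 4 * (z0 - z1)) = s z) ->
  periodic_eig_index gam f (4 * (z0 - z1)) 1 0 /\ periodic_eig_index gam f (4 * (z0 - z1)) 2 mu2.
Proof.
  intros HV HS Pq0 Pu Ps. set (T := 4 * (z0 - z1)).
  pose proof (sh_signs HS). pose proof (sh_order HS).
  assert (Hbridge := fun mu q => periodic_solution_hill gam f T V mu q HV).
  assert (Hclass : forall nu q, periodic_solution gam f T nu q -> (exists z, q z <> 0) ->
            (nu = mu0 /\ exists al, forall z, q z = al * q0 z) \/
            (nu = 0 /\ exists al, forall z, q z = al * u z) \/ nu <= mu2).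
  { intros nu q Sq Hnt. apply Hbridge in Sq.
    now apply (symmetric_hill_classify V M z1 z0 mu0 mu2 q0 u s HS). }
  assert (E0 : periodic_eigenvalue gam f T mu0).
  { exists q0. split; [now apply Hbridge; split; [apply (sh_eig_q0 HS)|]|].
    exists 0. apply (sh_q0_nonzero HS). }
  assert (Eu : periodic_eigenvalue gam f T 0).
  { exists u. split; [now apply Hbridge; split; [apply (sh_eig_u HS)|]|].
    exists ((z1 + z0) / 2). apply (sh_u_nonzero HS). lra. }
  assert (Es : periodic_eigenvalue gam f T mu2).
  { exists s. split; [now apply Hbridge; split; [apply (sh_eig_s HS)|]|].
    exists ((z1 + z0) / 2). apply (sh_s_nonzero HS). lra. }
  apply (periodic_eig_index_spectral_gap gam f T mu0 mu2); auto.
  - apply (pmult_simple _ _ _ _ q0 E0). intros q Sq Hnt.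
    destruct (Hclass mu0 q Sq Hnt) as [[_ Hal]|[[? _]|?]]; [exact Hal | lra | lra].
  - apply (pmult_simple _ _ _ _ u Eu). intros q Sq Hnt.
    destruct (Hclass 0 q Sq Hnt) as [[? _]|[[_ Hal]|?]]; [lra | exact Hal | lra].
  - intros nu [q [Sq Hnt]]. destruct (Hclass nu q Sq Hnt) as [[? _]|[[? _]|?]]; auto.
Qed.

Lemma librational_wave_normal_form c f E T : c ^ 2 <> 1 -> traveling_wave c f ->
  has_energy c f E -> 0 < E < 2 -> fundamental_period f T ->
  exists gam E' h, 0 < gam /\ 0 < E' < 2 /\ pendulum gam E' h /\ (forall z, -PI < h z < PI) /\
    fundamental_period h T /\ forall z, / (c ^ 2 - 1) * cos (f z) = gam * cos (h z).
Proof.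
  intros Hc Htw Hen HE HF.
  assert (Hgam : / (c ^ 2 - 1) <> 0) by (apply Rinv_neq_0_compat; lra).
  destruct (pendulum_normalize _ E f Hgam HE (traveling_wave_pendulum c f E Hc Htw Hen))
    as [gam [E' [C [Hg [HE' [Hpend HVC]]]]]].
  destruct (pendulum_branch gam E' _ Hg (proj2 HE') Hpend) as [K [HK Hrange]].
  exists gam, E', (fun z => f z + C + K). split; [exact Hg|]. split; [exact HE'|].
  split; [|split; [exact Hrange|]; split].
  - apply (pendulum_shift gam E' gam E' _ K Hpend);
      [intros x; now rewrite (proj1 (HK x)) | intros x; now rewrite (proj2 (HK x))].
  - do 2 apply fundamental_period_shift. exact HF.
  - intros z. now rewrite HVC, (proj2 (HK _)).
Qed.

Theorem lemma3p7 (c : R) (f : R -> R) (E T : R) :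
  c ^ 2 <> 1 ->
  traveling_wave c f ->
  has_energy c f E ->
  0 < E < 2 ->
  fundamental_period f T ->
  periodic_eig_index (/ (c ^ 2 - 1)) f T 1 0 /\
  exists mu2, periodic_eig_index (/ (c ^ 2 - 1)) f T 2 mu2 /\ mu2 < 0.
Proof.
  intros Hc Htw Hen HE HF.
  destruct (librational_wave_normal_form c f E T Hc Htw Hen HE HF)
    as [gam [E' [h [Hg [HE' [Hh [Hrange [HFh HV]]]]]]]].
  destruct (pendulum_symmetric_hill gam E' h Hh Hg HE' Hrange T HFh) as [z1 [z0 [HT HS]]].
  assert (Hp := fundamental_period_periodic h T HFh Hrange).
  rewrite HT in Hp |- *.
  destruct (symmetric_hill_eig_index _ f _ _ _ _ _ _ _ _ _ HV HS) as [H1 H2].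
  - intros z. now rewrite Hp.
  - apply Derive_periodic; [apply (proj1 Hh) | exact Hp].
  - intros z. now rewrite Hp.
  - split; [exact H1|]. exists (- gam * E' / 2). split; [exact H2|].
    pose proof (sh_signs HS). lra.
Qed.
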